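(* For every $(\varepsilon,\delta)\in\mathbb{R}^2$, the transformation $\sigma_{(\varepsilon,\delta)}$ of the set of overmarked boxes commutes with the involution $j$, and therefore induces a transformation of the set of marked boxes.
   Context: Let $V$ be a 3-dimensional real vector space. An overmarked box is $\Theta=((p,q,r,s;t,b),(P,Q,R,S;T,B))$ with $p,\dots,b\in\mathbf{P}(V)$ and lines $P,\dots,B$ of $\mathbf{P}(V)$ such that $P=ts$, $Q=tr$, $R=bq$, $S=bp$, $T=pq$, $B=rs$ (here $xy$ is the line through points $x,y$) and $T\cap B\notin\{p,q,r,s,t,b\}$. A $\Theta$-basis is a basis of $V$, unique up to scaling, in which $p=[-1:1:0]$, $q=[1:1:0]$, $r=[1:0:1]$, $s=[-1:0:1]$. The involution $j$ maps $\Theta$ to $((q,p,s,r;t,b),(Q,P,S,R;T,B))$; marked boxes are $j$-orbits. For $(\varepsilon,\delta)\in\mathbb{R}^2$ let $$\Sigma_{(\varepsilon,\delta)}=\begin{pmatrix}1&0&0\\0&e^{-\delta}\cosh\varepsilon&-\sinh\varepsilon\\0&-\sinh\varepsilon&e^{\delta}\cosh\varepsilon\end{pmatrix},$$ and let $\sigma_{(\varepsilon,\delta)}(\Theta)$ be the image of $\Theta$ (points and lines) under the projective transformation whose matrix in a $\Theta$-basis is $\Sigma_{(\varepsilon,\delta)}$. *)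

From HB Require Import structures.
From mathcomp Require Import all_boot all_order all_algebra.
From mathcomp Require Import Rstruct.
From Stdlib Require Import Rdefinitions Rfunctions Rtrigo_def.
Set Implicit Arguments. Unset Strict Implicit. Unset Printing Implicit Defensive.
Import Order.TTheory GRing.Theory Num.Theory.
Local Open Scope ring_scope.

(* A point of P(V) is represented by a nonzero row
   vector x : 'rV_3, a line of P(V) (a 2-plane of V) by a nonzero column
   covector L : 'cV_3; the point x lies on L iff x *m L = 0. *)
Definition pt := 'rV[R]_3.
Definition ln := 'cV[R]_3.

Definition peq m n (u v : 'M[R]_(m, n)) : Prop :=
  exists k : R, k != 0 /\ v = k *: u.

Definition on_line (x : pt) (L : ln) : Prop := x *m L = 0.

Definition is_join (x y : pt) (L : ln) : Prop :=
  ~ peq x y /\ on_line x L /\ on_line y L.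

Record obox := OBox {
  bp : pt; bq : pt; br : pt; bs : pt; bt : pt; bb : pt;
  lP : ln; lQ : ln; lR : ln; lS : ln; lT : ln; lB : ln }.

Definition overmarked (X : obox) : Prop :=
  (bp X != 0 /\ bq X != 0 /\ br X != 0 /\ bs X != 0 /\ bt X != 0 /\ bb X != 0) /\
  (lP X != 0 /\ lQ X != 0 /\ lR X != 0 /\ lS X != 0 /\ lT X != 0 /\ lB X != 0) /\
  (is_join (bt X) (bs X) (lP X) /\ is_join (bt X) (br X) (lQ X) /\
   is_join (bb X) (bq X) (lR X) /\ is_join (bb X) (bp X) (lS X) /\
   is_join (bp X) (bq X) (lT X) /\ is_join (br X) (bs X) (lB X)) /\
  ~ peq (lT X) (lB X) /\
  exists z : pt, [/\ z != 0, on_line z (lT X), on_line z (lB X) &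
    ~ peq z (bp X) /\ ~ peq z (bq X) /\ ~ peq z (br X) /\ ~ peq z (bs X) /\
    ~ peq z (bt X) /\ ~ peq z (bb X)].

Definition jbox (X : obox) : obox :=
  OBox (bq X) (bp X) (bs X) (br X) (bt X) (bb X)
       (lQ X) (lP X) (lS X) (lR X) (lT X) (lB X).

Definition box_peq (X Y : obox) : Prop :=
  (peq (bp X) (bp Y) /\ peq (bq X) (bq Y) /\ peq (br X) (br Y) /\
   peq (bs X) (bs Y) /\ peq (bt X) (bt Y) /\ peq (bb X) (bb Y)) /\
  (peq (lP X) (lP Y) /\ peq (lQ X) (lQ Y) /\ peq (lR X) (lR Y) /\
   peq (lS X) (lS Y) /\ peq (lT X) (lT Y) /\ peq (lB X) (lB Y)).

(* A basis of V is an invertible matrix M whose rows e_1, e_2, e_3 are the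
   basis vectors; coordinates c : 'rV_3 correspond to the vector c *m M. *)
Definition crd (a b c : R) : 'rV[R]_3 := \row_(i < 3) [:: a; b; c]`_i.

Definition theta_basis (X : obox) (M : 'M[R]_3) : Prop :=
  M \in unitmx /\
  peq (crd (-1) 1 0 *m M) (bp X) /\ peq (crd 1 1 0 *m M) (bq X) /\
  peq (crd 1 0 1 *m M) (br X) /\ peq (crd (-1) 0 1 *m M) (bs X).

Definition Sigma (eps del : R) : 'M[R]_3 :=
  \matrix_(i < 3, j < 3) nth 0 (nth [::]
    [:: [:: 1; 0; 0];
        [:: 0; exp (- del) * cosh eps; - sinh eps];
        [:: 0; - sinh eps; exp del * cosh eps]] i) j.

(* The projective transformation whose matrix (acting on column coordinate
   vectors) in the basis M is A: on vectors v |-> v *m (M^-1 A^T M). *)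
Definition ptrans (M A : 'M[R]_3) : 'M[R]_3 := invmx M *m A^T *m M.

(* image of a box under the transformation g (points v |-> v g, lines
   L |-> g^-1 L, so that incidence is preserved) *)
Definition box_image (g : 'M[R]_3) (X : obox) : obox :=
  OBox (bp X *m g) (bq X *m g) (br X *m g) (bs X *m g) (bt X *m g) (bb X *m g)
       (invmx g *m lP X) (invmx g *m lQ X) (invmx g *m lR X)
       (invmx g *m lS X) (invmx g *m lT X) (invmx g *m lB X).

(* sigma_(eps,delta)(X) computed with the Theta-basis M of X *)
Definition sigma (eps del : R) (M : 'M[R]_3) (X : obox) : obox :=
  box_image (ptrans M (Sigma eps del)) X.

(* Since j swaps p with q and r with s, a Theta-basis of j X is, up to scale,
   the image of a Theta-basis of X under the reflection diag(-1, 1, 1).  This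
   reflection commutes with every Sigma_(eps,delta), so both bases define the
   same projective transformation g, and sigma(j X) = g(j X) = j(g X) = j(sigma X).
   That g maps overmarked boxes to overmarked boxes is because an invertible
   linear map preserves nonvanishing, proportionality and incidence. *)

From mathcomp Require Import all_boot all_algebra.
From Stdlib Require Import Rdefinitions RIneq Rtrigo_def Exp_prop.
From mathcomp Require Import Rstruct ring lra.
Import GRing.Theory.
Local Open Scope ring_scope.

Section ProjectiveImage.
Variable g : 'M[R]_3.
Hypothesis g_unit : g \in unitmx.

Lemma pt_image_neq0 (x : pt) : x != 0 -> x *m g != 0.
Proof. by apply: contraNneq => xg0; rewrite -(mulmxK g_unit x) xg0 mul0mx. Qed.

Lemma ln_image_neq0 (L : ln) : L != 0 -> invmx g *m L != 0.
Proof. by apply: contraNneq => gL0; rewrite -(mulKVmx g_unit L) gL0 mulmx0. Qed.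

Lemma peq_pt_image (x y : pt) : peq (x *m g) (y *m g) -> peq x y.
Proof.
case=> k [k0 e]; exists k; split => //.
by rewrite -(mulmxK g_unit y) e -scalemxAl mulmxK.
Qed.

Lemma peq_ln_image (L L' : ln) : peq (invmx g *m L) (invmx g *m L') -> peq L L'.
Proof.
case=> k [k0 e]; exists k; split => //.
by rewrite -(mulKVmx g_unit L') e scalemxAr mulKVmx.
Qed.

Lemma on_line_image (x : pt) (L : ln) :
  on_line x L -> on_line (x *m g) (invmx g *m L).
Proof. by rewrite /on_line mulmxA mulmxK. Qed.

Lemma is_join_image (x y : pt) (L : ln) :
  is_join x y L -> is_join (x *m g) (y *m g) (invmx g *m L).
Proof.
case=> xy [xL yL]; split; first by move/peq_pt_image.
by split; apply: on_line_image.
Qed.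

Lemma overmarked_box_image (X : obox) : overmarked X -> overmarked (box_image g X).
Proof.
case: X => p q r s t b P Q R' S T B; rewrite /overmarked /=.
move=> [pts [lns [joins [TB [z [z0 zT zB zs]]]]]].
split; first by move: pts => [?[?[?[?[??]]]]]; do !split; apply: pt_image_neq0.
split; first by move: lns => [?[?[?[?[??]]]]]; do !split; apply: ln_image_neq0.
split.
  by move: joins => [?[?[?[?[??]]]]]; do 5 (split; first exact: is_join_image);
     exact: is_join_image.
split; first by move/peq_ln_image.
exists (z *m g); split; [exact: pt_image_neq0 | exact: on_line_image
                        | exact: on_line_image |].
by move: zs => [?[?[?[?[??]]]]]; do 5 (split; first by move/peq_pt_image);
   move/peq_pt_image.
Qed.

Lemma box_image_jbox (X : obox) : box_image g (jbox X) = jbox (box_image g X).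
Proof. by case: X. Qed.

End ProjectiveImage.

Lemma peq_refl m n (u : 'M[R]_(m, n)) : peq u u.
Proof. by exists 1; rewrite scale1r oner_neq0. Qed.

Lemma box_peq_refl (X : obox) : box_peq X X.
Proof. by split; do !split; exact: peq_refl. Qed.

Lemma ptrans_unit {M A : 'M[R]_3} :
  M \in unitmx -> A \in unitmx -> ptrans M A \in unitmx.
Proof. by move=> Mu Au; rewrite !unitmx_mul unitmx_inv unitmx_tr Mu Au. Qed.

Lemma ptrans_change_basis (M M' A : 'M[R]_3) :
  M \in unitmx -> M' \in unitmx ->
  M' *m invmx M *m A^T = A^T *m (M' *m invmx M) ->
  ptrans M' A = ptrans M A.
Proof.
move=> Mu M'u comm; rewrite /ptrans -!mulmxA; apply: (canLR (mulKmx M'u)).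
by rewrite !mulmxA comm -[RHS]mulmxA mulmxKV.
Qed.

Local Notation i1 := (lift ord0 ord0 : 'I_3).
Local Notation i2 := (lift ord0 (lift ord0 ord0) : 'I_3).

Lemma ord3P (i : 'I_3) : [\/ i = ord0, i = i1 | i = i2].
Proof.
by case: i => [[|[|[|i]]] Hi]; [constructor 1 | constructor 2 | constructor 3 | ];
   try apply: val_inj.
Qed.

Lemma cosh_opp (e : R) : cosh (- e) = cosh e.
Proof. by rewrite /cosh Ropp_involutive Rplus_comm. Qed.

Lemma sinh_opp (e : R) : sinh (- e) = - sinh e.
Proof. by rewrite /sinh Ropp_involutive !RdivE !RminusE -mulNr opprB. Qed.

Lemma exp_mulN (x : R) : exp x * exp (- x) = 1.
Proof. by rewrite -RmultE -exp_plus Rplus_opp_r exp_0. Qed.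

Lemma cosh_sqr_sub_sinh_sqr (e : R) : cosh e * cosh e - sinh e * sinh e = 1.
Proof.
rewrite -(exp_mulN e) /cosh /sinh !RdivE !RplusE RminusE (_ : IZR 2 = 2%:R) //.
by field.
Qed.

Lemma Sigma_mulNN (eps del : R) : Sigma eps del *m Sigma (- eps) (- del) = 1.
Proof.
have hyp := cosh_sqr_sub_sinh_sqr eps.
have exp_del := exp_mulN del.
apply/matrixP => i j; rewrite !mxE !big_ord_recl big_ord0 !mxE.
by case: (ord3P i) => ->; case: (ord3P j) => ->;
   rewrite /= ?cosh_opp ?sinh_opp ?Ropp_involutive; nra.
Qed.

Lemma Sigma_unit (eps del : R) : Sigma eps del \in unitmx.
Proof. by case: (mulmx1_unit (Sigma_mulNN eps del)). Qed.

(* Numerals in arguments of type [R], such as those of [crd], are Stdlib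
   numerals [IZR z], which [lra] treats as opaque atoms. *)
Definition IZR_numE := (R0E, R1E, erefl : IZR (-1) = -1 :> R).

Definition reflx : 'M[R]_3 := diag_mx (crd (-1) 1 1).

Lemma reflx_Sigma_tr_comm (eps del : R) :
  reflx *m (Sigma eps del)^T = (Sigma eps del)^T *m reflx.
Proof.
apply/matrixP => i j; rewrite mul_diag_mx mul_mx_diag !mxE.
by case: (ord3P i) => ->; case: (ord3P j) => ->;
   rewrite /= ?mulr0 ?mul0r ?mulr1 ?mul1r.
Qed.

Lemma crd_mulmx_scale (a b c a' b' c' k : R) (N : 'M[R]_3) :
  crd a b c *m N = k *: crd a' b' c' ->
  [/\ a * N ord0 ord0 + b * N i1 ord0 + c * N i2 ord0 = k * a',
      a * N ord0 i1 + b * N i1 i1 + c * N i2 i1 = k * b' &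
      a * N ord0 i2 + b * N i1 i2 + c * N i2 i2 = k * c'].
Proof.
move=> /matrixP E.
have col j : a * N ord0 j + b * N i1 j + c * N i2 j = k * crd a' b' c' 0 j.
  by move: (E 0 j); rewrite !mxE !big_ord_recl big_ord0 !mxE /= addr0 addrA.
by split; rewrite col mxE.
Qed.

Lemma swap_frame_mx (N : 'M[R]_3) (c1 c2 c3 c4 : R) :
  crd (-1) 1 0 *m N = c1 *: crd 1 1 0 ->
  crd 1 1 0 *m N = c2 *: crd (-1) 1 0 ->
  crd 1 0 1 *m N = c3 *: crd (-1) 0 1 ->
  crd (-1) 0 1 *m N = c4 *: crd 1 0 1 ->
  N = c1 *: reflx.
Proof.
move=> /crd_mulmx_scale + /crd_mulmx_scale + /crd_mulmx_scale + /crd_mulmx_scale.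
rewrite !IZR_numE => -[p0 p1 p2] [q0 q1 q2] [r0 r1 r2] [s0 s1 s2].
apply/matrixP => i j; rewrite !mxE.
by case: (ord3P i) => ->; case: (ord3P j) => ->; rewrite /= !IZR_numE; lra.
Qed.

Lemma peq_change_basis {M M' : 'M[R]_3} {u v y : 'rV[R]_3} : M \in unitmx ->
  peq (u *m M') y -> peq (v *m M) y -> exists c, u *m (M' *m invmx M) = c *: v.
Proof.
move=> Mu [k1 [k10 e1]] [k2 [k20 e2]]; exists (k2 / k1).
have : k1 *: (u *m M') = k2 *: (v *m M) by rewrite -e1 -e2.
move/(congr1 (fun A => k1^-1 *: A *m invmx M)).
rewrite !scalerA mulVf // scale1r mulmxA => ->.
by rewrite -scalemxAl mulmxK // mulrC.
Qed.

Lemma theta_basis_jbox {X : obox} {M M' : 'M[R]_3} :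
  theta_basis X M -> theta_basis (jbox X) M' ->
  exists c, M' *m invmx M = c *: reflx.
Proof.
case=> Mu [hp [hq [hr hs]]] [_ [hp' [hq' [hr' hs']]]].
have [c1 E1] := peq_change_basis Mu hp' hq.
have [c2 E2] := peq_change_basis Mu hq' hp.
have [c3 E3] := peq_change_basis Mu hr' hs.
have [c4 E4] := peq_change_basis Mu hs' hr.
by exists c1; exact: swap_frame_mx E1 E2 E3 E4.
Qed.

Theorem lemma7p1 (eps del : R) (X : obox) (M M' : 'M[R]_3) :
  overmarked X -> theta_basis X M -> theta_basis (jbox X) M' ->
  overmarked (sigma eps del M X) /\
  box_peq (sigma eps del M' (jbox X)) (jbox (sigma eps del M X)).
Proof.
move=> HX thetaM thetaM'.
have [Mu M'u] := (thetaM.1, thetaM'.1).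
have [c Ec] := theta_basis_jbox thetaM thetaM'.
have same_map : ptrans M' (Sigma eps del) = ptrans M (Sigma eps del).
  apply: ptrans_change_basis => //.
  by rewrite Ec -scalemxAl -scalemxAr reflx_Sigma_tr_comm.
split.
  by apply: overmarked_box_image HX; exact: ptrans_unit Mu (Sigma_unit eps del).
by rewrite /sigma same_map box_image_jbox; exact: box_peq_refl.
Qed.
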